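(* Let $A\in\mathbb{R}^{n\times p}$ be an arbitrary matrix with $n<p$, and let $x^\circ\in\mathbb{R}^p$ be arbitrary. Then for each $q\in[0,2]$ there exists a non-zero vector $\tilde x\in\mathbb{R}^p$ with $A\tilde x=Ax^\circ$ and $$s_q(\tilde x)\ge\frac1{\pi e}\Big(1-\frac np\Big)^2 p.$$ Also, for $q\in(2,\infty]$ there exists a non-zero vector $\bar x\in\mathbb{R}^p$ with $A\bar x=Ax^\circ$ and $$s_q(\bar x)\ge\frac{\sqrt{\frac2{\pi e}}\,(p-n)}{1+\sqrt{16\log(2p)}}.$$
   Context: For $x\in\mathbb{R}^p\setminus\{0\}$ let $\pi_j(x):=|x_j|/\|x\|_1$. For $q\notin\{0,1,\infty\}$, $s_q(x):=(\|x\|_q/\|x\|_1)^{q/(1-q)}$; $s_0(x):=\|x\|_0$ (number of nonzero entries), $s_1(x):=\exp\big(-\sum_j\pi_j(x)\log\pi_j(x)\big)$, $s_\infty(x):=\|x\|_1/\|x\|_\infty$. *)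

From HB Require Import structures.
From mathcomp Require Import all_boot all_order all_algebra.
From mathcomp Require Import all_classical all_reals all_analysis.
Set Implicit Arguments. Unset Strict Implicit. Unset Printing Implicit Defensive.
Import Order.TTheory GRing.Theory Num.Theory.
Local Open Scope ring_scope.

Section Sparsity.
Variables (R : realType) (p : nat).
Implicit Types x : 'cV[R]_p.

Definition l0norm x : R := #|[set i : 'I_p | x i 0 != 0]|%:R.
Definition l1norm x : R := \sum_(i < p) `|x i 0|.
Definition linfnorm x : R := \big[Num.max/0]_(i < p) `|x i 0|.
Definition lqnorm (q : R) x : R := powR (\sum_(i < p) powR `|x i 0| q) q^-1.
Definition pij x (i : 'I_p) : R := `|x i 0| / l1norm x.
Definition entropy x : R :=
  - \sum_(i < p) (if pij x i == 0 then 0 else pij x i * ln (pij x i)).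

(* the numerical sparsity s_q(x), q in [0, +oo] encoded as an extended real *)
Definition s_q (q : \bar R) x : R :=
  match q with
  | +oo%E => l1norm x / linfnorm x
  | -oo%E => 0 (* not used *)
  | (r%:E)%E =>
      if r == 0 then l0norm x
      else if r == 1 then expR (entropy x)
      else powR (lqnorm r x / l1norm x) (r / (1 - r))
  end.
End Sparsity.

From HB Require Import structures.
From mathcomp Require Import all_boot all_order all_algebra.
From mathcomp Require Import all_classical all_reals all_analysis.
From mathcomp Require Import ring lra zify.
Import Order.TTheory GRing.Theory Num.Theory.
Local Open Scope ring_scope.

(* The bounds hold with room to spare: the fibre {x | A x = A x0} always
   contains a nonzero x with at least p - n coordinates of maximal modulus,
   obtained by moving inside a box [-T, T]^p along kernel directions of A that
   fix the coordinates already at the boundary, until one more coordinate hits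
   it.  Such an x has ||x||_1 / ||x||_oo >= p - n, and every s_q(x), q >= 0,
   dominates ||x||_1 / ||x||_oo. *)

Section Norms.
Context {R : realType} {p : nat} (x : 'cV[R]_p).

Lemma ler_linfnorm i : `|x i 0| <= linfnorm x.
Proof.
by rewrite /linfnorm (bigD1 i) //= le_max lexx.
Qed.

Lemma linfnorm_le (T : R) :
  0 <= T -> (forall i, `|x i 0| <= T) -> linfnorm x <= T.
Proof.
move=> T_ge0 x_le_T; rewrite /linfnorm.
by apply: (big_ind (fun y => y <= T)) => // a b aT bT; rewrite ge_max aT bT.
Qed.

Lemma linfnorm_ge0 : 0 <= linfnorm x.
Proof.
by rewrite /linfnorm; apply: (big_ind (fun y => 0 <= y)) => // a b; rewrite le_max => ->.
Qed.

Lemma l1norm_gt0 : x != 0 -> 0 < l1norm x.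
Proof.
case/cV0Pn=> i xi_neq0; rewrite /l1norm (bigD1 i) //= ltr_pwDl ?normr_gt0 //.
exact: sumr_ge0.
Qed.

Lemma linfnorm_gt0 : x != 0 -> 0 < linfnorm x.
Proof.
by case/cV0Pn=> i xi_neq0; apply: lt_le_trans (ler_linfnorm i); rewrite normr_gt0.
Qed.

End Norms.

Lemma powR_le_mul_powR (R : realType) (a M r : R) :
  0 <= a <= M -> 1 <= r -> a `^ r <= a * M `^ (r - 1).
Proof.
case/andP=> a_ge0 a_le_M r_ge1.
rewrite -(mulr_powRB1 a_ge0 (lt_le_trans ltr01 r_ge1)); apply: ler_wpM2l => //.
by rewrite ge0_ler_powR ?subr_ge0 ?nnegrE ?(le_trans a_ge0).
Qed.

Lemma mul_powR_le_powR (R : realType) (a M r : R) :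
  0 <= a <= M -> 0 < r <= 1 -> a * M `^ (r - 1) <= a `^ r.
Proof.
case/andP=> a_ge0 a_le_M /andP[r_gt0 r_le1].
have [->|a_neq0] := eqVneq a 0; first by rewrite mul0r powR0 ?gt_eqF.
have a_gt0 : 0 < a by rewrite lt_neqAle eq_sym a_neq0.
have M_gt0 : 0 < M := lt_le_trans a_gt0 a_le_M.
rewrite -(mulr_powRB1 a_ge0 r_gt0); apply: ler_wpM2l => //.
rewrite -opprB !powRN lef_pV2 ?posrE ?powR_gt0 //.
by rewrite ge0_ler_powR ?subr_ge0 ?nnegrE // ltW.
Qed.

Section SparsityLowerBound.
Context {R : realType} {p : nat} (x : 'cV[R]_p) (M : R).
Hypotheses (M_gt0 : 0 < M) (x_le_M : forall i, `|x i 0| <= M)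
  (l1_gt0 : 0 < l1norm x).

Let S (r : R) := \sum_(i < p) `|x i 0| `^ r.

Lemma sum_powR_gt0 r : 0 < S r.
Proof.
have /cV0Pn[i xi_neq0] : x != 0.
  by apply: contraTneq l1_gt0 => ->; rewrite /l1norm big1 ?ltxx // => i _; rewrite mxE normr0.
rewrite /S (bigD1 i) //= ltr_pwDl ?powR_gt0 ?normr_gt0 //.
by apply: sumr_ge0 => j _; apply: powR_ge0.
Qed.

(* The factor 1 - r encodes the direction of the comparison: S r lies below
   M^(r-1) ||x||_1 for r >= 1 and above it for r <= 1. *)
Lemma ln_sum_powR_cmp r : 0 < r ->
  0 <= (1 - r) * (ln (S r) - ln (l1norm x) - (r - 1) * ln M).
Proof.
move=> r_gt0; rewrite -addrA -opprD.
have -> : ln (l1norm x) + (r - 1) * ln M = ln (M `^ (r - 1) * l1norm x).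
  by rewrite lnM ?posrE ?powR_gt0 // ln_powR addrC.
have Mpos : 0 < M `^ (r - 1) * l1norm x by rewrite mulr_gt0 ?powR_gt0.
have [r_le1|r_gt1] := lerP r 1.
- apply: mulr_ge0; rewrite subr_ge0 // ler_ln ?posrE ?sum_powR_gt0 //.
  rewrite /S mulr_sumr; apply: ler_sum => i _; rewrite mulrC.
  by apply: mul_powR_le_powR; rewrite ?normr_ge0 ?x_le_M ?r_gt0.
- apply: mulr_le0; first by rewrite subr_le0 ltW.
  rewrite subr_le0 ler_ln ?posrE ?sum_powR_gt0 //.
  rewrite /S mulr_sumr; apply: ler_sum => i _; rewrite mulrC.
  by apply: powR_le_mul_powR; rewrite ?normr_ge0 ?x_le_M ?ltW.
Qed.

Lemma l1_div_le_lq_sparsity r : 0 < r -> r != 1 ->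
  l1norm x / M <= (lqnorm r x / l1norm x) `^ (r / (1 - r)).
Proof.
move=> r_gt0 r_neq1.
have lq_gt0 : 0 < lqnorm r x by rewrite /lqnorm powR_gt0 // sum_powR_gt0.
have r1_neq0 : 1 - r != 0 by rewrite subr_eq0 eq_sym.
rewrite /powR gt_eqF ?divr_gt0 // -[l1norm x / M]lnK ?posrE ?divr_gt0 //.
rewrite ler_expR !ln_div ?posrE // /lqnorm ln_powR -/(S r) -subr_ge0.
have := @ln_sum_powR_cmp r r_gt0.
move: (ln (S r)) (ln (l1norm x)) (ln M) => s a b.
have -> : r / (1 - r) * (r^-1 * s - a) - (a - b)
  = (1 - r) * (s - a - (r - 1) * b) / (1 - r) ^+ 2.
  by field; rewrite r1_neq0 gt_eqF.
by move=> h; rewrite divr_ge0 ?sqr_ge0.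
Qed.

Lemma l1_div_le_l0norm : l1norm x / M <= l0norm x.
Proof.
rewrite ler_pdivrMr // /l1norm /l0norm cardsE (bigID (fun i => x i 0 != 0)) /=.
rewrite [X in _ + X]big1 ?addr0 => [|i /negPn/eqP ->]; last by rewrite normr0.
apply: le_trans (ler_sum _ (fun i _ => x_le_M i)) _.
by rewrite sumr_const mulr_natl.
Qed.

Lemma l1_div_le_expR_entropy : l1norm x / M <= expR (entropy x).
Proof.
have pij_sum : \sum_i pij x i = 1.
  by rewrite /pij -mulr_suml -/(l1norm x) divff // gt_eqF.
rewrite -[l1norm x / M]lnK ?posrE ?divr_gt0 // ler_expR ln_div ?posrE //.
rewrite /entropy lerNr opprB.
rewrite -[ln M - _]mul1r -pij_sum mulr_suml; apply: ler_sum => i _.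
case: ifP => [/eqP ->|/negbT pij_neq0]; first by rewrite mul0r.
have xi_gt0 : 0 < `|x i 0|.
  by rewrite normr_gt0; apply: contraNneq pij_neq0 => xi0; rewrite /pij xi0 normr0 mul0r.
apply: ler_wpM2l; first by rewrite divr_ge0 // ltW.
by rewrite /pij ln_div ?posrE // lerD2r ler_ln ?posrE.
Qed.

End SparsityLowerBound.

Lemma l1_div_linfnorm_le_s_q {R : realType} {p : nat} {x : 'cV[R]_p} {q : \bar R} :
  x != 0 -> (0 <= q)%E -> l1norm x / linfnorm x <= s_q q x.
Proof.
move=> x_neq0 q_ge0.
have linf_gt0 := linfnorm_gt0 x x_neq0; have l1_gt0 := l1norm_gt0 x x_neq0.
have x_le_linf := ler_linfnorm x.
case: q q_ge0 => [r| |] //= r_ge0; rewrite lee_fin in r_ge0.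
have [_|r_neq0] := eqVneq r 0; first exact: l1_div_le_l0norm.
have [_|r_neq1] := eqVneq r 1; first exact: l1_div_le_expR_entropy.
by apply: l1_div_le_lq_sparsity; rewrite // lt_neqAle eq_sym r_neq0.
Qed.

Lemma kernel_vector_vanishing_on {R : fieldType} {n p : nat} (A : 'M[R]_(n, p))
    (S : {set 'I_p}) :
  (n + #|S| < p)%N ->
  exists2 w : 'cV[R]_p, w != 0 & A *m w = 0 /\ forall i, i \in S -> w i 0 = 0.
Proof.
move=> dim_lt.
pose D := \matrix_(j < #|S|, i < p) ((i == enum_val j)%:R : R).
pose B := col_mx A D.
have /matrix0Pn[k [l Kkl]] : kermx B^T != 0.
  rewrite -mxrank_eq0 mxrank_ker mxrank_tr subn_eq0 -ltnNge.
  exact: leq_ltn_trans (rank_leq_row B) dim_lt.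
exists (row k (kermx B^T))^T; first by rewrite trmx_eq0; apply/rV0Pn; exists l; rewrite mxE.
have /eqP : B *m (row k (kermx B^T))^T = 0.
  by apply: trmx_inj; rewrite trmx_mul !trmxK -row_mul mulmx_ker row0 trmx0.
rewrite mul_col_mx col_mx_eq0 => /andP[/eqP Aw /eqP Dw]; split=> // i iS.
have := congr1 (fun m : 'cV[R]_#|S| => m (enum_rank_in iS i) 0) Dw.
rewrite [LHS]mxE (bigD1 i) //= big1 => [|j ji]; rewrite !mxE enum_rankK_in //.
  by rewrite eqxx mul1r addr0.
by rewrite (negbTE ji) mul0r.
Qed.

Lemma exists_step_to_boundary {R : realType} {I : finType} (x w : I -> R) {T : R} :
  (exists i, w i != 0) -> (forall i, `|x i| <= T) ->
  exists t j, [/\ w j != 0, `|x j + t * w j| = T & forall i, `|x i + t * w i| <= T].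
Proof.
case=> i0 wi0_neq0 x_le_T.
pose room i := (T - Num.sg (w i) * x i) / `|w i|.
have sg_mul_le (y z : R) : Num.sg z * y <= `|y|.
  apply: le_trans (ler_norm _) _; rewrite normrM normr_sg.
  by case: (z != 0); rewrite ?mul1r ?mul0r.
have [j wj_neq0 room_min] := @arg_minP _ _ _ i0 (fun i => w i != 0) room wi0_neq0.
set t := room j.
have t_ge0 : 0 <= t by rewrite divr_ge0 // subr_ge0 (le_trans (sg_mul_le _ _)).
(* multiplying by sg (w i) reduces to the case w i > 0 *)
have step_norm i : w i != 0 ->
    `|x i + t * w i| = `|Num.sg (w i) * x i + t * `|w i| |.
  move=> wi_neq0; have sg_norm1 : `|Num.sg (w i)| = 1 by rewrite normr_sg wi_neq0.
  by rewrite -[LHS]mul1r -sg_norm1 -normrM mulrDr mulrCA -normrEsg.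
exists t, j; split=> // [|i].
  have wj_gt0 : 0 < `|w j| by rewrite normr_gt0.
  by rewrite step_norm // /t /room divfK ?gt_eqF // subrKC ger0_norm // (le_trans _ (x_le_T j)).
have [wi_neq0|/negPn/eqP ->] := boolP (w i != 0); last by rewrite mulr0 addr0.
have wi_gt0 : 0 < `|w i| by rewrite normr_gt0.
have t_room : t * `|w i| <= T - Num.sg (w i) * x i.
  by rewrite -ler_pdivlMr //; apply: room_min.
have := sg_mul_le (x i) (- w i); rewrite sgrN mulNr lerNl => sg_ge.
have := x_le_T i; have := mulr_ge0 t_ge0 (ltW wi_gt0).
by rewrite step_norm // => *; rewrite ler_norml; apply/andP; split; lra.
Qed.

Section Saturation.
Context {R : realType} {n p : nat} (A : 'M[R]_(n, p)) (x0 : 'cV[R]_p) (T : R).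

Definition saturated (x : 'cV[R]_p) := [set i | `|x i 0| == T].

Lemma saturate_step x :
  A *m x = A *m x0 -> (forall i, `|x i 0| <= T) -> (n + #|saturated x| < p)%N ->
  exists x', [/\ A *m x' = A *m x0, forall i, `|x' i 0| <= T
             & (#|saturated x| < #|saturated x'|)%N].
Proof.
move=> Ax x_le_T dim_lt.
have [w w_neq0 [Aw w_sat]] := kernel_vector_vanishing_on A _ dim_lt.
have /cV0Pn w_nz := w_neq0.
have [t [j [wj_neq0 xj_sat x'_le_T]]] :=
  exists_step_to_boundary (fun i => x i 0) (fun i => w i 0) w_nz x_le_T.
have x'E i : (x + t *: w) i 0 = x i 0 + t * w i 0 by rewrite !mxE.
exists (x + t *: w); split=> [|i|]; first by rewrite mulmxDr -scalemxAr Aw scaler0 addr0.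
  by rewrite x'E.
apply: proper_card; apply/properP; split.
  apply/fintype.subsetP => i; rewrite !inE x'E => i_sat.
  by rewrite w_sat ?inE // mulr0 addr0.
exists j; first by rewrite inE x'E xj_sat.
by apply: contra wj_neq0 => j_sat; rewrite w_sat.
Qed.

Lemma exists_saturated :
  (forall i, `|x0 i 0| <= T) ->
  exists x, [/\ A *m x = A *m x0, forall i, `|x i 0| <= T
            & (p - n <= #|saturated x|)%N].
Proof.
move=> x0_le_T.
suff /(_ (p - n)%N (leqnn _)) : forall k, (k <= p - n)%N -> exists x,
    [/\ A *m x = A *m x0, forall i, `|x i 0| <= T & (k <= #|saturated x|)%N] by [].
elim=> [_|k IH k_lt]; first by exists x0.
have [x [Ax x_le_T k_le]] := IH (ltnW k_lt).
have [k_lt_sat|sat_le_k] := ltnP k #|saturated x|; first by exists x.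
have [|x' [Ax' x'_le_T sat_lt]] := saturate_step _ Ax x_le_T; first lia.
by exists x'; split=> //; lia.
Qed.

End Saturation.

Lemma exists_fibre_point_s_q_ge {R : realType} {n p : nat} (A : 'M[R]_(n, p))
    (x0 : 'cV[R]_p) :
  (n < p)%N ->
  exists2 x : 'cV[R]_p, x != 0 &
    A *m x = A *m x0 /\ forall q, (0 <= q)%E -> p%:R - n%:R <= s_q q x.
Proof.
move=> n_lt_p; pose T := 1 + linfnorm x0.
have x0_le_T i : `|x0 i 0| <= T by have := ler_linfnorm x0 i; rewrite /T; lra.
have T_gt0 : 0 < T by have := linfnorm_ge0 x0; rewrite /T; lra.
have [x [Ax x_le_T sat_ge]] := exists_saturated A x0 T x0_le_T.
have [j j_sat] : exists j, j \in saturated T x.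
  by apply/set0Pn; rewrite -card_gt0 (leq_trans _ sat_ge) // subn_gt0.
have xj_eq : `|x j 0| = T by move: j_sat; rewrite inE => /eqP.
have x_neq0 : x != 0 by apply/cV0Pn; exists j; rewrite -normr_gt0 xj_eq.
have l1_ge : #|saturated T x|%:R * T <= l1norm x.
  rewrite /l1norm (bigID (mem (saturated T x))) /= -[_ * T]addr0.
  rewrite lerD ?sumr_ge0 // (eq_bigr (fun=> T)) => [|i]; last by rewrite inE => /eqP.
  by rewrite sumr_const mulr_natl.
exists x => //; split=> // q q_ge0.
apply: le_trans (l1_div_linfnorm_le_s_q x_neq0 q_ge0).
rewrite ler_pdivlMr ?linfnorm_gt0 // -natrB; last exact: ltnW.
apply: le_trans l1_ge.
apply: ler_pM; rewrite ?ler_nat ?linfnorm_ge0 //.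
exact: linfnorm_le (ltW T_gt0) x_le_T.
Qed.

Lemma pi_e_ge2 (R : realType) : 2 <= pi * expR 1 :> R.
Proof.
have e_ge1 : 1 <= expR 1 :> R by rewrite (le_trans _ (expR_ge1Dx 1)) // lerDl.
by rewrite -[2 : R]mulr1 ler_pM // pi_ge2.
Qed.

Lemma small_q_bound_le_codim (R : realType) {n p : nat} : (n < p)%N ->
  (pi * expR 1)^-1 * (1 - n%:R / p%:R) ^+ 2 * p%:R <= p%:R - n%:R :> R.
Proof.
move=> n_lt_p; have p_gt0 : 0 < p%:R :> R by rewrite ltr0n (leq_ltn_trans _ n_lt_p).
have c_gt0 : 0 < pi * expR 1 :> R by apply: lt_le_trans (pi_e_ge2 R).
set u := 1 - n%:R / p%:R.
have -> : p%:R - n%:R = u * p%:R by rewrite mulrBl mul1r divfK // gt_eqF.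
have u_ge0 : 0 <= u by rewrite subr_ge0 ler_pdivrMr // mul1r ler_nat; exact: ltnW.
have u_le1 : u <= 1 by rewrite lerBlDr lerDl divr_ge0.
have c_le1 : (pi * expR 1 : R)^-1 <= 1.
  by rewrite invf_le1 // (le_trans _ (pi_e_ge2 R)) // ler1n.
apply: ler_wpM2r; first exact: ltW.
by rewrite expr2 mulrA ler_piMl // mulr_ile1 ?invr_ge0 // ltW.
Qed.

Lemma large_q_bound_le_codim (R : realType) {n p : nat} : (n <= p)%N ->
  Num.sqrt (2 / (pi * expR 1)) * (p%:R - n%:R)
    / (1 + Num.sqrt (16 * ln (2 * p%:R))) <= p%:R - n%:R :> R.
Proof.
move=> n_le_p; have pn_ge0 : 0 <= p%:R - n%:R :> R by rewrite subr_ge0 ler_nat.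
have c_gt0 : 0 < pi * expR 1 :> R by apply: lt_le_trans (pi_e_ge2 R).
have s_le1 : Num.sqrt (2 / (pi * expR 1)) <= 1 :> R.
  by rewrite -[X in _ <= X]sqrtr1 ler_wsqrtr // ler_pdivrMr // mul1r pi_e_ge2.
have d_ge1 : 1 <= 1 + Num.sqrt (16 * ln (2 * p%:R)) :> R by rewrite lerDl.
rewrite ler_pdivrMr ?(lt_le_trans ltr01) // [X in _ <= X]mulrC.
by apply: ler_wpM2r => //; apply: le_trans s_le1 d_ge1.
Qed.

Theorem lemma3 (R : realType) (n p : nat) (A : 'M[R]_(n, p)) (x0 : 'cV[R]_p) :
  (n < p)%N ->
  (forall q : \bar R, (0 <= q)%E -> (q <= 2%:E)%E ->
     exists xt : 'cV[R]_p, xt != 0 /\ A *m xt = A *m x0 /\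
       (pi * expR 1)^-1 * (1 - n%:R / p%:R) ^+ 2 * p%:R <= s_q q xt) /\
  (forall q : \bar R, (2%:E < q)%E ->
     exists xb : 'cV[R]_p, xb != 0 /\ A *m xb = A *m x0 /\
       Num.sqrt (2 / (pi * expR 1)) * (p%:R - n%:R)
         / (1 + Num.sqrt (16 * ln (2 * p%:R))) <= s_q q xb).
Proof.
move=> n_lt_p; have [x x_neq0 [Ax s_q_ge]] := exists_fibre_point_s_q_ge A x0 n_lt_p.
split=> [q q_ge0 _ | q q_gt2]; exists x; do 2!split=> //.
  exact: le_trans (small_q_bound_le_codim R n_lt_p) (s_q_ge q q_ge0).
apply: le_trans (large_q_bound_le_codim R (ltnW n_lt_p)) (s_q_ge q _).
by apply: le_trans (ltW q_gt2); rewrite lee_fin.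
Qed.
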